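(* Let $G$ be a connected nontrivial graph with $m$ vertices and let $n\geq4$. Then $$\lambda'(G\boxtimes K_n)=\min\{n^2\lambda(G),\ (n-1)(m+2e(G)),\ 2n\delta(G)+2n-4\}.$$
   Context: All graphs are finite, simple and undirected; ''nontrivial'' means having at least two vertices. $K_n$ denotes the complete graph on $n$ vertices. For a graph $G$: $e(G)=|E(G)|$; $\delta(G)$ is the minimum degree; $\lambda(G)$ is the edge-connectivity. A restricted edge-cut of a connected graph $G$ is a set $S\subseteq E(G)$ such that $G-S$ is disconnected and every component of $G-S$ has at least $2$ vertices; the restricted edge-connectivity $\lambda'(G)$ is the minimum cardinality of a restricted edge-cut. The strong product $G\boxtimes H$ has vertex set $V(G)\times V(H)$, with $(x_1,y_1)$ and $(x_2,y_2)$ adjacent iff either $x_1=x_2$ and $y_1y_2\in E(H)$, or $y_1=y_2$ and $x_1x_2\in E(G)$, or $x_1x_2\in E(G)$ and $y_1y_2\in E(H)$. *)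

From mathcomp Require Import all_boot.
Set Implicit Arguments. Unset Strict Implicit. Unset Printing Implicit Defensive.

(* A simple graph on a finite vertex type T is a symmetric irreflexive
   relation e : rel T.  Edges are 2-element vertex sets [set x; y]. *)
Section Graphs.
Variables (T : finType) (e : rel T).

Definition edges : {set {set T}} := [set [set x; y] | x in [set: T], y in [set: T] & e x y].
Definition num_edges : nat := #|edges|.

Definition deg (x : T) : nat := #|[set y | e x y]|.
(* minimum degree delta(G) (the default #|T| is never attained for T nonempty) *)
Definition min_deg : nat := \big[minn/#|T|]_(x : T) deg x.

Definition gconnected : Prop := forall x y : T, connect e x y.

Definition remove_edges (S : {set {set T}}) : rel T :=
  fun x y => e x y && ([set x; y] \notin S).

Definition is_edge_cut (S : {set {set T}}) : bool :=
  (S \subset edges) && [exists x, exists y, ~~ connect (remove_edges S) x y].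

Definition component (S : {set {set T}}) (x : T) : {set T} :=
  [set y | connect (remove_edges S) x y].

Definition is_restricted_edge_cut (S : {set {set T}}) : bool :=
  is_edge_cut S && [forall x, 1 < #|component S x|].

(* minima over cuts; cuts are subsets of edges, so the default #|edges| is a top *)
Definition edge_conn : nat :=
  \big[minn/#|edges|]_(S | is_edge_cut S) #|S|.
Definition restricted_edge_conn : nat :=
  \big[minn/#|edges|]_(S | is_restricted_edge_cut S) #|S|.
End Graphs.

Definition strong_prod (T1 T2 : finType) (e1 : rel T1) (e2 : rel T2) : rel (T1 * T2) :=
  fun u v => [|| (u.1 == v.1) && e2 u.2 v.2,
                 (u.2 == v.2) && e1 u.1 v.1
               | e1 u.1 v.1 && e2 u.2 v.2].

Definition complete_graph (n : nat) : rel 'I_n := fun x y => x != y.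
Arguments complete_graph n : clear implicits.

From mathcomp Require Import all_boot order zify.
Set Implicit Arguments. Unset Strict Implicit. Unset Printing Implicit Defensive.

(* A vertex set X of G ⊠ K_n is seen through its fibre sizes s(x) = |X ∩ ({x} × K_n)|:
   the number of arcs leaving X is
     sum_x s(x)(n - s(x)) + sum_{x ~ y} s(x)(n - s(y)).
   A minimum restricted cut is the boundary of a set X in which every vertex has a
   neighbour on its own side.  Call x mixed when 0 < s(x) < n.  If some s(x) lies in
   [2, n-2], or two mixed vertices are adjacent, or a mixed vertex sees only full
   (resp. empty) fibres, the arcs at that vertex (or pair) already number at least
   2nδ + 2n - 4.  Otherwise the mixed vertices are independent and the count is
   affine in each of their fibre sizes, so rounding them to 0 or n does not
   increase it, and the rounded set is A × K_n with A a proper nonempty vertex set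
   of G: at least n²λ arcs.  The sets A × K_n (A a side of a minimum edge cut) and {x} × {i, j}
   (x of minimum degree) attain these two bounds, while (n - 1)(|V| + 2e(G)) is
   never below 2nδ + 2n - 4 and so never the minimum. *)

Lemma geq_bigmin_cond (I : finType) (P : pred I) (F : I -> nat) D i :
  P i -> \big[minn/D]_(j | P j) F j <= F i.
Proof. by rewrite -minEnat -leEnat; apply: Order.TotalTheory.bigmin_le_cond. Qed.

Lemma leq_bigmin (I : finType) (P : pred I) (F : I -> nat) D b :
  b <= D -> (forall i, P i -> b <= F i) -> b <= \big[minn/D]_(j | P j) F j.
Proof. by move=> bD bF; elim/big_ind: _ => // x y hx hy; rewrite leq_min hx hy. Qed.

Lemma sum_pairs (I J : finType) (F : I * J -> nat) :
  \sum_p F p = \sum_i \sum_j F (i, j).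
Proof. by rewrite pair_bigA; apply: eq_bigr => -[]. Qed.

Lemma sum_mulb (I : finType) (P : pred I) (F : I -> nat) :
  \sum_i P i * F i = \sum_(i | P i) F i.
Proof. by rewrite [RHS]big_mkcond; apply: eq_bigr => i _; rewrite mulnbl. Qed.

Lemma card_mul_le_sum (I : finType) (P : pred I) (F : I -> nat) c :
  (forall i, P i -> c <= F i) -> #|[set i | P i]| * c <= \sum_(i | P i) F i.
Proof. by move=> cF; rewrite -sum_nat_cond_const leq_sum. Qed.

Lemma card_pairs (I J : finType) (A : {set I * J}) :
  #|A| = \sum_i #|[set j | (i, j) \in A]|.
Proof.
rewrite -sum1_card big_mkcond sum_pairs; apply: eq_bigr => i _.
by rewrite -sum1_card [RHS]big_mkcond; apply: eq_bigr => j _; rewrite inE.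
Qed.

Lemma exists_other (I : finType) (A : {set I}) i :
  1 < #|A| -> exists2 j, j \in A & j != i.
Proof.
case/card_gt1P=> [a [b [aA bA ab]]].
by case: (eqVneq a i) => [ai|]; [exists b; rewrite // -ai eq_sym | exists a].
Qed.

Section Boundary.
Variables (V : finType) (r : rel V).
Hypotheses (r_sym : symmetric r) (r_irr : irreflexive r).
Implicit Types (X : {set V}) (S : {set {set V}}).

Definition out_arcs (X : {set V}) : {set V * V} :=
  [set p | [&& p.1 \in X, p.2 \notin X & r p.1 p.2]].

Definition out_edges (X : {set V}) : {set {set V}} :=
  [set [set p.1; p.2] | p in out_arcs X].

(* Every vertex keeps a neighbour once the edges leaving X are removed, i.e. the
   boundary of X is a restricted cut. *)
Definition side_closed (X : {set V}) : Prop :=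
  forall x, exists2 y, r x y & (y \in X) = (x \in X).

Lemma side_closedC X : side_closed X -> side_closed (~: X).
Proof. by move=> Xc x; have [y rxy yx] := Xc x; exists y; rewrite // !inE yx. Qed.

Lemma card_out_edges X : #|out_edges X| = #|out_arcs X|.
Proof.
apply: card_in_imset => -[a b] [c d]; rewrite !inE /=.
move=> /and3P[aX bX _] /and3P[cX dX _] E.
have : a \in [set c; d] by rewrite -E set21.
have : b \in [set c; d] by rewrite -E set22.
rewrite !inE => /orP[/eqP bc|/eqP->] /orP[/eqP->|/eqP ad] //.
- by move: bX; rewrite bc cX.
- by move: aX; rewrite ad (negbTE dX).
- by move: aX; rewrite ad (negbTE dX).
Qed.

Lemma out_edges_sub X : out_edges X \subset edges r.
Proof.
apply/subsetP => E /imsetP[p]; rewrite inE => /and3P[_ _ rp] ->.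
by apply/imset2P; exists p.1 p.2; rewrite ?inE.
Qed.

Lemma out_edges_component_sub S u : out_edges (component r S u) \subset S.
Proof.
apply/subsetP => E /imsetP[p]; rewrite !inE => /and3P[up1 up2 rp] ->.
apply: contraNT up2 => pS; apply: connect_trans up1 (connect1 _).
by rewrite /remove_edges rp pS.
Qed.

Lemma card_out_arcs_component S u : #|out_arcs (component r S u)| <= #|S|.
Proof. by rewrite -card_out_edges subset_leq_card ?out_edges_component_sub. Qed.

Lemma connect_remove_out_edges X a b :
  connect (remove_edges r (out_edges X)) a b -> a \in X -> b \in X.
Proof.
move=> /connectP[p + ->]; elim: p a => //= c p IH a /andP[/andP[rac acX] pth] aX.
apply: IH pth _; apply: contraNT acX => cX; apply/imsetP.
by exists (a, c); rewrite // inE aX cX rac.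
Qed.

Lemma out_edges_edge_cut X a b : a \in X -> b \notin X -> is_edge_cut r (out_edges X).
Proof.
move=> aX bX; rewrite /is_edge_cut out_edges_sub; apply/existsP; exists a.
apply/existsP; exists b; apply: contra bX => ab.
exact: connect_remove_out_edges ab aX.
Qed.

Lemma edge_conn_le_out_arcs X a b : a \in X -> b \notin X -> edge_conn r <= #|out_arcs X|.
Proof. by move=> aX bX; rewrite -card_out_edges geq_bigmin_cond ?(out_edges_edge_cut aX bX). Qed.

Lemma out_edges_restricted X a b : a \in X -> b \notin X -> side_closed X ->
  is_restricted_edge_cut r (out_edges X).
Proof.
move=> aX bX Xc; rewrite /is_restricted_edge_cut (out_edges_edge_cut aX bX).
apply/forallP => x; have [y rxy yX] := Xc x.
apply/card_gt1P; exists x, y; rewrite !inE connect0; split=> //; last first.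
  by apply: contraTneq rxy => ->; rewrite r_irr.
apply: connect1; rewrite /remove_edges rxy; apply/imsetP => -[p].
rewrite inE => /and3P[p1X p2X _] E.
have side z : z \in [set p.1; p.2] -> (z \in X) = (x \in X).
  by rewrite -E !inE => /orP[]/eqP->.
by move: p2X; rewrite side ?set22 // -(side p.1) ?set21 ?p1X.
Qed.

Lemma restricted_edge_conn_le_out_arcs X a b : a \in X -> b \notin X -> side_closed X ->
  restricted_edge_conn r <= #|out_arcs X|.
Proof.
move=> aX bX Xc; rewrite -card_out_edges geq_bigmin_cond //.
exact: out_edges_restricted aX bX Xc.
Qed.

Lemma restricted_cut_component S : is_restricted_edge_cut r S ->
  exists X a b, [/\ a \in X, b \notin X, side_closed X & #|out_arcs X| <= #|S|].
Proof.
case/andP=> /andP[_ /existsP[u /existsP[v uv]]] /forallP comp_gt1.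
exists (component r S u), u, v; split; rewrite ?inE ?connect0 ?card_out_arcs_component //.
move=> x; have [y + yx] := exists_other x (comp_gt1 x); rewrite inE => xy.
case/connectP: xy yx => -[|c p] /= pth ->; first by rewrite eqxx.
case/andP: pth => xc _; exists c; first by case/andP: xc.
have cx : remove_edges r S c x by rewrite /remove_edges r_sym setUC.
by rewrite !inE; apply/idP/idP => uy; apply: connect_trans uy (connect1 _).
Qed.

End Boundary.

Section CutValue.
Variables (T : finType) (n : nat).
Implicit Types (r : rel T) (s : T -> nat) (A : {set T}).

(* Number of arcs leaving a vertex set of G ⊠ K_n whose fibre over x has s x
   elements, when r is the edge relation of G (card_out_arcs_strong_prod). *)
Definition cut_value r s :=
  \sum_x s x * (n - s x) + \sum_x \sum_(y | r x y) s x * (n - s y).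

Lemma eq_cut_value r s1 s2 : s1 =1 s2 -> cut_value r s1 = cut_value r s2.
Proof.
move=> eq_s; rewrite /cut_value; congr (_ + _); apply: eq_bigr => x _; rewrite ?eq_s //.
by apply: eq_bigr => y _; rewrite !eq_s.
Qed.

Definition cross s x y := s x * (n - s y) + s y * (n - s x).

Definition del_vertices r A : rel T := fun x y => [&& r x y, x \notin A & y \notin A].

Lemma del_vertices_sym r A : symmetric r -> symmetric (del_vertices r A).
Proof. by move=> rs x y; rewrite /del_vertices rs [(y \notin A) && _]andbC. Qed.

Lemma del_vertices_irr r A : irreflexive r -> irreflexive (del_vertices r A).
Proof. by move=> ri x; rewrite /del_vertices ri. Qed.

Lemma sum_arcs_split r A (h : T -> T -> nat) :
  symmetric r -> {in A &, forall x y, ~~ r x y} ->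
  \sum_x \sum_(y | r x y) h x y =
  \sum_x \sum_(y | del_vertices r A x y) h x y + \sum_(x in A) \sum_(y | r x y) (h x y + h y x).
Proof.
move=> rs indA.
have cond (P : rel T) (F : T -> T -> nat) :
    \sum_x \sum_(y | P x y) F x y = \sum_x \sum_y P x y * F x y.
  by apply: eq_bigr => x _; rewrite sum_mulb.
have inA (F : T -> T -> nat) :
    \sum_(x in A) \sum_(y | r x y) F x y = \sum_x \sum_(y | (x \in A) && r x y) F x y.
  by rewrite big_mkcond; apply: eq_bigr => x _; case: (x \in A); rewrite //= big_pred0_eq.
rewrite (eq_bigr _ (fun x _ => big_split _ _ _ _ _)) big_split /= !inA.
rewrite (cond r h) (cond (del_vertices r A) h) (cond (fun x y => (x \in A) && r x y) h).
rewrite (cond (fun x y => (x \in A) && r x y) (fun x y => h y x)).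
rewrite [X in _ + (_ + X)]exchange_big -!big_split; apply: eq_bigr => x _.
rewrite -!big_split; apply: eq_bigr => y _; rewrite /= (rs y x) /del_vertices.
case: (boolP (x \in A)) => xA; case: (boolP (y \in A)) => yA; case: (boolP (r x y)) => rxy;
  rewrite /= ?mul0n ?mul1n ?add0n ?addn0 //.
by have := indA x y xA yA; rewrite rxy.
Qed.

Lemma cut_value_split r s A : symmetric r -> {in A &, forall x y, ~~ r x y} ->
  cut_value r s = cut_value (del_vertices r A) s + \sum_(x in A) \sum_(y | r x y) cross s x y.
Proof. by move=> rs indA; rewrite /cut_value (sum_arcs_split _ rs indA) addnA. Qed.

Lemma cut_value_del1 r s x : symmetric r -> irreflexive r ->
  cut_value r s = cut_value (del_vertices r [set x]) s + \sum_(y | r x y) cross s x y.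
Proof.
move=> rs ri; rewrite (@cut_value_split _ _ [set x] rs) ?big_set1 //.
by move=> y z /set1P-> /set1P->; rewrite ri.
Qed.

Lemma diag_le_cut_value r s A : \sum_(x in A) s x * (n - s x) <= cut_value r s.
Proof. by apply: leq_trans (leq_addr _ _); rewrite big_mkcond leq_sum // => x _; case: ifP. Qed.

Lemma star_le_cut_value r s x : symmetric r -> irreflexive r ->
  s x * (n - s x) + \sum_(y | r x y) cross s x y <= cut_value r s.
Proof.
move=> rs ri; rewrite (cut_value_del1 s x rs ri) leq_add2r.
by have := diag_le_cut_value (del_vertices r [set x]) s [set x]; rewrite big_set1.
Qed.

Lemma edge_le_cut_value r s x z : symmetric r -> irreflexive r -> r x z ->
  s x * (n - s x) + s z * (n - s z) + \sum_(y | r x y) cross s x y +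
  \sum_(y | del_vertices r [set x] z y) cross s z y <= cut_value r s.
Proof.
move=> rs ri rxz; have xz : x != z by apply: contraTneq rxz => ->; rewrite ri.
rewrite (cut_value_del1 s x rs ri).
rewrite (cut_value_del1 s z (del_vertices_sym _ rs) (del_vertices_irr _ ri)).
have := diag_le_cut_value (del_vertices (del_vertices r [set x]) [set z]) s [set x; z].
by rewrite big_setU1 ?inE // big_set1 /=; lia.
Qed.

Lemma sum_cross r s x : \sum_(y | r x y) cross s x y =
  s x * \sum_(y | r x y) (n - s y) + (n - s x) * \sum_(y | r x y) s y.
Proof.
by rewrite big_split /= !big_distrr; congr (_ + _); apply: eq_bigr => y _; rewrite mulnC.
Qed.

Lemma cut_value_indicator r (P : {set T}) :
  cut_value r (fun x => n * (x \in P)) = n * n * #|out_arcs r P|.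
Proof.
rewrite /cut_value big1 => [|x _]; last by case: (x \in P); rewrite ?muln1 ?subnn ?muln0.
rewrite add0n card_pairs big_distrr; apply: eq_bigr => x _.
rewrite [RHS]mulnC -sum_nat_cond_const big_mkcond [RHS]big_mkcond.
apply: eq_bigr => y _; rewrite !inE /=.
by case: (x \in P); case: (y \in P); case: (r x y);
  rewrite /= ?muln1 ?muln0 ?subnn ?subn0 ?muln0 ?mul0n.
Qed.

Lemma cut_value_single r x0 p : irreflexive r ->
  cut_value r (fun y => (y == x0) * p) = p * (n - p) + #|[set y | r x0 y]| * (p * n).
Proof.
move=> ri; rewrite /cut_value; congr (_ + _).
  by rewrite (bigD1 x0) //= eqxx mul1n big1 ?addn0 // => x /negbTE->; rewrite mul0n.
rewrite (bigD1 x0) //= [X in _ + X]big1 ?addn0; last first.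
  by move=> x /negbTE->; rewrite big1 // => y _; rewrite !mul0n.
rewrite -sum_nat_cond_const; apply: eq_bigr => y rxy.
have /negbTE-> : y != x0 by apply: contraTneq rxy => ->; rewrite ri.
by rewrite eqxx mul1n mul0n subn0.
Qed.

End CutValue.

Section StrongProduct.
Variables (T : finType) (e : rel T) (n : nat).
Hypotheses (e_sym : symmetric e) (e_irr : irreflexive e).
Local Notation H := (strong_prod e (complete_graph n)).
Implicit Types (X : {set T * 'I_n}).

Definition fibre X x : {set 'I_n} := [set i | (x, i) \in X].

Lemma strong_prod_completeE x i y j : H (x, i) (y, j) = (x == y) && (i != j) || e x y.
Proof.
rewrite /strong_prod /complete_graph /=.
by case: (eqVneq x y) => [<-|]; rewrite ?e_irr ?andbF ?orbF //; case: (e x y); case: (i == j).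
Qed.

Lemma strong_prod_complete_sym : symmetric H.
Proof. by move=> [x i] [y j]; rewrite !strong_prod_completeE e_sym eq_sym [j == i]eq_sym. Qed.

Lemma strong_prod_complete_irr : irreflexive H.
Proof. by move=> [x i]; rewrite strong_prod_completeE !eqxx e_irr. Qed.

Lemma fibreC X x : fibre (~: X) x = ~: fibre X x.
Proof. by apply/setP => i; rewrite !inE. Qed.

Lemma card_fibreC X x : #|fibre (~: X) x| = n - #|fibre X x|.
Proof. by rewrite fibreC cardsCs setCK card_ord. Qed.

Lemma card_fibre_le X x : #|fibre X x| <= n.
Proof. by rewrite -[leqRHS]card_ord max_card. Qed.

Lemma card_out_arcs_strong_prod X :
  #|out_arcs H X| = cut_value n e (fun x => #|fibre X x|).
Proof.
pose out y := #|fibre (~: X) y|.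
have out_fibre x i y : (x, i) \in X ->
    #|[set j | (y, j) \in [set q | ((x, i), q) \in out_arcs H X]]| =
    (y == x) * out y + e x y * out y.
  move=> xi; case: (eqVneq y x) => [->|yx].
    rewrite e_irr addn0 mul1n; apply: eq_card => j.
    rewrite !inE /= xi strong_prod_completeE eqxx e_irr orbF /=.
    by case: (eqVneq i j) => [<-|]; rewrite ?xi ?andbT.
  rewrite mul0n add0n mulnbl; case: ifP => exy; last first.
    apply/eqP; rewrite cards_eq0; apply/eqP/setP => j.
    by rewrite !inE /= strong_prod_completeE [x == y]eq_sym (negbTE yx) exy !andbF.
  by apply: eq_card => j; rewrite !inE /= xi strong_prod_completeE exy orbT andbT.
rewrite card_pairs sum_pairs /cut_value -big_split; apply: eq_bigr => x _ /=.
rewrite (bigID (fun i => (x, i) \in X)) /= [X in _ + X]big1 => [|i /negbTE xi]; last first.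
  by apply/eqP; rewrite cards_eq0; apply/eqP/setP => q; rewrite !inE xi.
rewrite addn0 (eq_bigr _ (fun i xi => card_pairs _)).
rewrite (eq_bigr _ (fun i xi => eq_bigr _ (fun y _ => out_fibre x i y xi))).
rewrite sum_nat_cond_const big_split /= !sum_mulb big_pred1_eq mulnDr big_distrr.
by congr (_ * _ + _); [|apply: eq_bigr => y _]; rewrite /out card_fibreC.
Qed.

Lemma side_closed_fibre1 X x : side_closed H X -> #|fibre X x| = 1 ->
  exists2 y, e x y & 0 < #|fibre X y|.
Proof.
move=> Xc X1; have /set0Pn[i] : fibre X x != set0 by rewrite -card_gt0 X1.
rewrite inE => xi; have [[y j]] := Xc (x, i).
rewrite strong_prod_completeE => /orP[/andP[/eqP<- ij] | exy] yjX; last first.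
  by exists y => //; apply/card_gt0P; exists j; rewrite inE yjX.
suff : 1 < #|fibre X x| by rewrite X1.
by apply/card_gt1P; exists i, j; rewrite !inE yjX xi.
Qed.

Lemma fibre_setX (A : {set T}) (P : {set 'I_n}) x :
  fibre (setX A P) x = if x \in A then P else set0.
Proof. by apply/setP => i; rewrite !inE /=; case: (x \in A); rewrite ?inE. Qed.

Lemma card_fibre_setX (A : {set T}) (P : {set 'I_n}) x :
  #|fibre (setX A P) x| = (x \in A) * #|P|.
Proof. by rewrite fibre_setX; case: (x \in A); rewrite ?cards0 ?mul1n. Qed.

Lemma side_closed_setX (A : {set T}) (P : {set 'I_n}) :
  #|P| != 1 -> #|~: P| != 1 -> side_closed H (setX A P).
Proof.
have gt1 (Q : {set 'I_n}) i : i \in Q -> #|Q| != 1 -> 1 < #|Q|.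
  by move=> iQ Q1; rewrite ltn_neqAle eq_sym Q1 card_gt0; apply/set0Pn; exists i.
move=> P1 PC1 [x i].
have [j jP ji] : exists2 j, (j \in P) = (i \in P) & j != i.
  case: (boolP (i \in P)) => iP.
    by have [j jP ji] := exists_other i (gt1 _ _ iP P1); exists j; rewrite // jP iP.
  have iPC : i \in ~: P by rewrite inE.
  have [j + ji] := exists_other i (gt1 _ _ iPC PC1); rewrite inE => /negbTE jP.
  by exists j; rewrite // jP (negbTE iP).
exists (x, j); first by rewrite strong_prod_completeE eqxx eq_sym ji.
by rewrite !inE /= jP.
Qed.

End StrongProduct.

Section LowerBound.
Variables (T : finType) (e : rel T) (n : nat).
Hypotheses (e_sym : symmetric e) (e_irr : irreflexive e) (n_ge4 : 4 <= n).
Hypothesis deg_gt0 : forall x, 0 < deg e x.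

Local Notation D := (2 * n * min_deg e + 2 * n - 4).

Lemma min_deg_le x : min_deg e <= deg e x.
Proof. exact: geq_bigmin_cond. Qed.

Lemma card_nbrsD1 x z : e x z -> #|[set y | e x y && (y != z)]| = (deg e x).-1.
Proof.
move=> exz; rewrite /deg [in RHS](cardsD1 z) inE exz /=.
by apply: eq_card => y; rewrite !inE andbC.
Qed.

Lemma cross_mid_ge a b : 2 <= a <= n - 2 -> b <= n -> 2 * n <= a * (n - b) + b * (n - a).
Proof. nia. Qed.

Lemma cross_mixed_ge a b : 0 < a < n -> b <= n -> n <= a * (n - b) + b * (n - a).
Proof. nia. Qed.

Lemma mixed_pair_ge a b : 0 < a < n -> 0 < b < n ->
  4 * n - 4 <= a * (n - a) + b * (n - b) + (a * (n - b) + b * (n - a)).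
Proof. nia. Qed.

Lemma minn_le_convex a A B : a <= n -> n * minn A B <= a * B + (n - a) * A.
Proof.
move=> an; rewrite -{1}(subnKC an) mulnDl.
case: (leqP B A) => [BA | /ltnW AB].
  by rewrite leq_add2l leq_mul2l BA orbT.
by rewrite leq_add2r leq_mul2l AB orbT.
Qed.

Variable s : T -> nat.
Hypothesis s_le : forall x, s x <= n.

Local Notation cut := (cut_value n e s).

Lemma cut_ge_mid x : 2 <= s x <= n - 2 -> D <= cut.
Proof.
move=> sx_mid; apply: leq_trans (star_le_cut_value n s x e_sym e_irr).
have nbrs : deg e x * (2 * n) <= \sum_(y | e x y) cross n s x y.
  by apply: card_mul_le_sum => y _; exact: cross_mid_ge sx_mid (s_le y).
have diag : 2 * (n - 2) <= s x * (n - s x) by case/andP: sx_mid => ? ?; nia.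
have : min_deg e * (2 * n) <= deg e x * (2 * n) by rewrite leq_mul2r min_deg_le orbT.
lia.
Qed.

Lemma cut_ge_mixed_edge x z : e x z -> 0 < s x < n -> 0 < s z < n -> D <= cut.
Proof.
move=> exz sx sz; have zx : z != x by apply: contraTneq exz => ->; rewrite e_irr.
apply: leq_trans (edge_le_cut_value n s e_sym e_irr exz); rewrite (bigD1 z) //=.
have nbrs_x : (deg e x).-1 * n <= \sum_(y | e x y && (y != z)) cross n s x y.
  by rewrite -(card_nbrsD1 exz) card_mul_le_sum // => y _; exact: cross_mixed_ge sx (s_le y).
have nbrs_z : (deg e z).-1 * n <= \sum_(y | del_vertices e [set x] z y) cross n s z y.
  have <- : #|[set y | del_vertices e [set x] z y]| = (deg e z).-1.
    have ezx : e z x by rewrite e_sym.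
    rewrite -(card_nbrsD1 ezx).
    by apply: eq_card => y; rewrite !inE /del_vertices !inE zx.
  by rewrite card_mul_le_sum // => y _; exact: cross_mixed_ge sz (s_le y).
have := mixed_pair_ge sx sz; rewrite -/(cross n s x z) => pair.
have deg_n y : min_deg e * n <= (deg e y).-1 * n + n.
  by rewrite addnC -mulSn prednK // leq_mul2r min_deg_le orbT.
have := deg_n x; have := deg_n z; lia.
Qed.

Lemma cut_ge_isolated x : s x * (n - s x) = n - 1 ->
  (forall y, e x y -> n * (n - 1) <= cross n s x y) -> D <= cut.
Proof.
move=> diag nbrs; apply: leq_trans (star_le_cut_value n s x e_sym e_irr).
rewrite diag; have := card_mul_le_sum nbrs; rewrite -/(deg e x) => sum_nbrs.
have h1 : min_deg e * (2 * n) <= deg e x * (2 * n) by rewrite leq_mul2r min_deg_le orbT.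
have h2 : deg e x * (3 * n) <= deg e x * (n * (n - 1)) by rewrite leq_mul2l; apply/orP; right; nia.
have h3 : n <= deg e x * n by rewrite -{1}[n]mul1n leq_mul2r deg_gt0 orbT.
lia.
Qed.

Lemma cut_ge_edge_conn y1 w1 : s y1 = n -> s w1 = 0 ->
  {in [set x | 0 < s x < n] &, forall x z, ~~ e x z} -> n ^ 2 * edge_conn e <= cut.
Proof.
set M := [set x | _] => sy1 sw1 indM.
pose A x := \sum_(y | e x y) s y; pose B x := \sum_(y | e x y) (n - s y).
(* Each mixed fibre is rounded to the cheaper endpoint: with its (non-mixed)
   neighbours fixed, its contribution s x * B x + (n - s x) * A x is affine. *)
pose P := [set x | if x \in M then B x <= A x else s x == n].
pose t x := n * (x \in P).
have t_out x : x \notin M -> t x = s x.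
  move=> xM; rewrite /t inE (negbTE xM); have := s_le x; move: xM; rewrite inE.
  by case: (eqVneq (s x) n) => [->|]; rewrite ?muln1 ?muln0 //; lia.
have t_nbr x y : x \in M -> e x y -> t y = s y.
  by move=> xM exy; apply: t_out; apply: contraL exy; apply: indM.
have rest : cut_value n (del_vertices e M) t <= cut_value n (del_vertices e M) s.
  rewrite {1}/cut_value big1 ?add0n => [|x _]; last first.
    by rewrite /t; case: (x \in P); rewrite ?muln1 ?subnn ?muln0.
  apply: leq_trans (leq_addl _ _); apply: eq_leq; apply: eq_bigr => x _.
  by apply: eq_bigr => y /and3P[_ xM yM]; rewrite !t_out.
have star x : x \in M -> \sum_(y | e x y) cross n t x y <= \sum_(y | e x y) cross n s x y.
  move=> xM; have tB : \sum_(y | e x y) (n - t y) = B x.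
    by apply: eq_bigr => y exy; rewrite (t_nbr x y xM exy).
  have tA : \sum_(y | e x y) t y = A x by apply: eq_bigr => y /(t_nbr x y xM).
  rewrite !sum_cross tB tA -/(A x) -/(B x); apply: leq_trans (minn_le_convex _ _ (s_le x)).
  rewrite /t inE xM; case: (leqP (B x) (A x)) => [BA | /ltnW AB].
    by rewrite /= !muln1 subnn mul0n addn0.
  by rewrite /= !muln0 mul0n subn0 add0n.
have cut_t : n ^ 2 * edge_conn e <= cut_value n e t.
  have y1M : y1 \notin M by rewrite inE sy1 ltnn andbF.
  have w1M : w1 \notin M by rewrite inE sw1.
  rewrite cut_value_indicator mulnn leq_mul2l (@edge_conn_le_out_arcs _ _ _ y1 w1) ?orbT //.
    by rewrite inE (negbTE y1M) sy1.
  by rewrite inE (negbTE w1M) sw1; lia.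
apply: leq_trans cut_t _; rewrite (cut_value_split n t e_sym indM) (cut_value_split n s e_sym indM).
by rewrite leq_add // leq_sum.
Qed.

Lemma cut_lower_bound :
  (exists x, 0 < s x) -> (exists x, s x < n) ->
  (forall x, s x = 1 -> exists2 y, e x y & 0 < s y) ->
  (forall x, s x = n.-1 -> exists2 y, e x y & s y < n) ->
  minn (n ^ 2 * edge_conn e) D <= cut.
Proof.
move=> [x0 sx0] [x1 sx1] one_nbr co_one_nbr; rewrite geq_min.
have [x mid_x|no_mid] := pickP (fun x => 2 <= s x <= n - 2).
  by rewrite (cut_ge_mid mid_x) orbT.
pose mixed_edge p := [&& e p.1 p.2, 0 < s p.1 < n & 0 < s p.2 < n].
have [[x z] /and3P[exz sx sz]|indep] := pickP mixed_edge.
  by rewrite (cut_ge_mixed_edge exz) ?orbT.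
have mixed_ext x : 0 < s x < n -> s x = 1 \/ s x = n.-1.
  by have := no_mid x; rewrite /= => /negbT; lia.
have [y1 /eqP sy1|no_full] := pickP (fun x => s x == n); last first.
  have sx0n : s x0 < n by rewrite ltn_neqAle no_full s_le.
  have nbr0 y : e x0 y -> s y = 0.
    move=> exy; have := indep (x0, y); have := no_full y; have := s_le y.
    by rewrite /mixed_edge /= exy sx0 sx0n /=; lia.
  case: (mixed_ext x0) => [|sx0_1|sx0_n]; first by rewrite sx0.
    by have [y /nbr0->] := one_nbr x0 sx0_1.
  rewrite (@cut_ge_isolated x0) ?orbT // => [|y exy]; first by rewrite sx0_n; nia.
  by rewrite /cross (nbr0 y exy) sx0_n; nia.
have [w1 /eqP sw1|no_empty] := pickP (fun x => s x == 0); last first.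
  have sx1n : 0 < s x1 by rewrite lt0n no_empty.
  have nbr_n y : e x1 y -> s y = n.
    move=> exy; have := indep (x1, y); have := no_empty y; have := s_le y.
    by rewrite /mixed_edge /= exy sx1 sx1n /=; lia.
  case: (mixed_ext x1) => [|sx1_1|sx1_n]; first by rewrite sx1 sx1n.
    rewrite (@cut_ge_isolated x1) ?orbT // => [|y exy]; first by rewrite sx1_1; nia.
    by rewrite /cross (nbr_n y exy) sx1_1; nia.
  by have [y] := co_one_nbr x1 sx1_n; rewrite ltn_neqAle => /nbr_n->; rewrite eqxx.
rewrite (@cut_ge_edge_conn y1 w1) // => x z; rewrite !inE => sx sz.
by have := indep (x, z); rewrite /mixed_edge /= sx sz !andbT => ->.
Qed.

End LowerBound.

Section StrongProductComplete.
Variables (T : finType) (e : rel T) (n : nat).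
Hypotheses (e_sym : symmetric e) (e_irr : irreflexive e) (e_conn : gconnected e).
Hypotheses (T_gt1 : 1 < #|T|) (n_ge4 : 4 <= n).

Local Notation H := (strong_prod e (complete_graph n)).
Local Notation D := (2 * n * min_deg e + 2 * n - 4).

Let H_sym : symmetric H := strong_prod_complete_sym (n := n) e_sym e_irr.
Let H_irr : irreflexive H := strong_prod_complete_irr (n := n) e_irr.

Lemma exists_other_vertex x : exists2 y : T, y \in [set: T] & y != x.
Proof. by apply: exists_other; rewrite cardsT. Qed.

Lemma deg_gt0 x : 0 < deg e x.
Proof.
have [y _ yx] := exists_other_vertex x.
case/connectP: (e_conn x y) yx => -[|z p] /= pth ->; first by rewrite eqxx.
by case/andP: pth => exz _ _; apply/card_gt0P; exists z; rewrite inE.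
Qed.

Lemma deg_lt_card x : deg e x < #|T|.
Proof.
rewrite /deg -cardsT; apply: proper_card; rewrite properT.
by apply/negP => /eqP nbrs; have := in_setT x; rewrite -nbrs inE e_irr.
Qed.

Lemma deg_le_num_edges x : deg e x <= num_edges e.
Proof.
rewrite /deg -(@card_in_imset _ _ (fun y => [set x; y])) => [|y z]; last first.
  rewrite !inE => exy _ E; have : y \in [set x; z] by rewrite -E set22.
  by rewrite !inE => /orP[/eqP yx|/eqP //]; move: exy; rewrite yx e_irr.
apply/subset_leq_card/subsetP => E /imsetP[y]; rewrite inE => exy ->.
by apply/imset2P; exists x y; rewrite ?inE.
Qed.

Lemma min_deg_attained : exists x, min_deg e = deg e x.
Proof.
have /card_gt1P[x0 _] := T_gt1.
rewrite /min_deg -minEnat.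
have [|x _ ->] := @Order.TotalTheory.eq_bigmin _ _ _ #|T| x0 xpredT (deg e) isT.
  by move=> y _; rewrite leEnat ltnW ?deg_lt_card.
by exists x.
Qed.

Lemma restricted_conn_le_edge_cut S : is_edge_cut e S -> restricted_edge_conn H <= n ^ 2 * #|S|.
Proof.
case/andP=> _ /existsP[u /existsP[v uv]]; set A := component e S u.
have i0 : 'I_n := Ordinal (leq_trans (isT : 0 < 4) n_ge4).
have Xc : side_closed H (setX A [set: 'I_n]).
  by apply: side_closed_setX; rewrite ?setCT ?cards0 // cardsT card_ord; lia.
have uX : (u, i0) \in setX A [set: 'I_n] by rewrite !inE connect0.
have vX : (v, i0) \notin setX A [set: 'I_n] by rewrite !inE andbT.
apply: leq_trans (restricted_edge_conn_le_out_arcs H_irr uX vX Xc) _.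
rewrite card_out_arcs_strong_prod // (@eq_cut_value _ _ _ _ (fun x => n * (x \in A))).
  by rewrite cut_value_indicator mulnn leq_mul2l card_out_arcs_component orbT.
by move=> x; rewrite card_fibre_setX cardsT card_ord mulnC.
Qed.

Lemma restricted_conn_le_edge_conn : restricted_edge_conn H <= n ^ 2 * edge_conn e.
Proof.
rewrite /edge_conn; elim/big_ind: _ => [||S /restricted_conn_le_edge_cut //].
- have /card_gt1P[x [y [_ _ xy]]] := T_gt1.
  have xX : x \in [set x] by rewrite inE.
  have yX : y \notin [set x] by rewrite inE eq_sym.
  apply: leq_trans (restricted_conn_le_edge_cut (out_edges_edge_cut e xX yX)) _.
  by rewrite leq_mul2l subset_leq_card ?out_edges_sub ?orbT.
- by move=> a b ha hb; rewrite /minn; case: ifP.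
Qed.

Lemma min_deg_side_closed_set : exists (X : {set T * 'I_n}) a b,
  [/\ a \in X, b \notin X, side_closed H X & #|out_arcs H X| = D].
Proof.
have [x0 ->] := min_deg_attained; have [y0 _ y0x0] := exists_other_vertex x0.
have /card_gt1P[i [j [_ _ ij]]] : 1 < #|[set: 'I_n]| by rewrite cardsT card_ord; lia.
have P2 : #|[set i; j]| = 2 by rewrite cards2 ij.
have PC : #|~: [set i; j]| = n - 2 by rewrite cardsCs setCK card_ord P2.
exists (setX [set x0] [set i; j]), (x0, i), (y0, i); split.
- by rewrite !inE !eqxx.
- by rewrite !inE (negbTE y0x0).
- by apply: side_closed_setX; rewrite ?P2 ?PC //; lia.
rewrite card_out_arcs_strong_prod // (@eq_cut_value _ _ _ _ (fun y => (y == x0) * 2)).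
  by rewrite cut_value_single // -/(deg e x0); lia.
by move=> y; rewrite card_fibre_setX inE P2.
Qed.

Lemma restricted_conn_le_min_deg : restricted_edge_conn H <= D.
Proof.
have [X [a [b [aX bX Xc <-]]]] := min_deg_side_closed_set.
exact: (restricted_edge_conn_le_out_arcs H_irr aX bX Xc).
Qed.

Lemma card_restricted_cut_ge S : is_restricted_edge_cut H S -> minn (n ^ 2 * edge_conn e) D <= #|S|.
Proof.
case/(restricted_cut_component H_sym) => X [[a i] [[b j] [aX bX Xc le_S]]].
apply: leq_trans le_S; rewrite card_out_arcs_strong_prod //.
have s_le := card_fibre_le X; have s_compl := card_fibreC X.
apply: cut_lower_bound => //; first exact: deg_gt0.
- by exists a; apply/card_gt0P; exists i; rewrite inE.
- exists b; have : 0 < #|fibre (~: X) b| by apply/card_gt0P; exists j; rewrite !inE.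
  by rewrite s_compl; have := s_le b; lia.
- by move=> x; apply: side_closed_fibre1.
move=> x sx; have [|y exy] := side_closed_fibre1 e_irr (side_closedC Xc) (x := x).
  by rewrite s_compl sx; lia.
by rewrite s_compl => y_out; exists y => //; have := s_le y; lia.
Qed.

Lemma restricted_conn_ge : minn (n ^ 2 * edge_conn e) D <= restricted_edge_conn H.
Proof.
apply: leq_bigmin => [|S]; last exact: card_restricted_cut_ge.
have [X [a [b [aX bX Xc _]]]] := min_deg_side_closed_set.
apply: leq_trans (card_restricted_cut_ge (out_edges_restricted H_irr aX bX Xc)) _.
exact/subset_leq_card/out_edges_sub.
Qed.

Lemma min_deg_term_le_middle_term : D <= (n - 1) * (#|T| + 2 * num_edges e).
Proof.
have [x ->] := min_deg_attained.
have := deg_gt0 x; have := deg_lt_card x; have := deg_le_num_edges x; nia.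
Qed.

End StrongProductComplete.

Theorem theorem3p7 (T : finType) (e : rel T) (n : nat) :
  symmetric e -> irreflexive e -> gconnected e -> 1 < #|T| -> 4 <= n ->
  restricted_edge_conn (strong_prod e (complete_graph n)) =
  minn (minn (n ^ 2 * edge_conn e) ((n - 1) * (#|T| + 2 * num_edges e)))
       (2 * n * min_deg e + 2 * n - 4).
Proof.
move=> e_sym e_irr e_conn T_gt1 n_ge4.
have le_edge_conn := restricted_conn_le_edge_conn e_irr T_gt1 n_ge4.
have le_min_deg := restricted_conn_le_min_deg e_irr T_gt1 n_ge4.
have ge_min := restricted_conn_ge e_sym e_irr e_conn T_gt1 n_ge4.
have volume_not_min := min_deg_term_le_middle_term (n := n) e_irr e_conn T_gt1 n_ge4.
lia.
Qed.
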